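(* Let $G$ be a finite group and $\rho':G\to\mathrm{U}(\mathcal{H})$ an irreducible unitary representation on a $d$-dimensional complex Hilbert space with character $\chi$. Let $H_1,H_2\leq G$ and let $\nu_i$ be a linear character of $H_i$ ($i=1,2$) such that $\sum_{s\in H_i}\chi(s)\overline{\nu_i(s)}=|H_i|$. Let $\Pi_{\nu_i}$ be the projection of $L^2(H_i)$ onto its $\nu_i$-isotypic (one-dimensional) subspace, $\Pi_{\nu_i}'$ its extension to $L^2(G)$ by zero (as in the context), and let $\Phi_i=(\rho'(g)v_i)_{g\in G}$ be group frames with Gram matrices $G_{\Phi_i}=\langle v_i,v_i\rangle\frac{|G|}{d}\Pi_\chi\Pi_{\nu_i}'$. Let $V_i\subseteq L^2(G)$ be the column space of $G_{\Phi_i}$ and $M:V_1\to V_2$ a $G$-linear unitary map, extended by $0$ on $V_1^\perp$. Then for every $a\in G$ there is $\lambda_a\in\mathbb{C}$, depending only on $a$, such that $$\lambda_a M[s,g]=\frac{1}{|H_1||H_2|}\sum_{h_1\in H_1}\sum_{h_2\in H_2}\overline{\nu_2(h_2)}\,\chi(a^{-1}h_2s^{-1}gh_1)\,\overline{\nu_1(h_1)}\quad\text{for all }s,g\in G,$$ where $M[s,g]=\langle M\delta_g,\delta_s\rangle$.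
   Context: For a finite group $K$, $L^2(K)$ is the space of functions $K\to\mathbb{C}$ with convolution $(f*h)(s)=\sum_{x\in K}f(x)h(x^{-1}s)$, basis $\delta_g$ (indicator of $\{g\}$), and left regular representation $\rho(g)f=\delta_g*f$. $\Pi_\chi f=\frac{\chi(1)}{|G|}\overline{\chi}*f$ on $L^2(G)$. The projection $\Pi_{\nu_i}$ on $L^2(H_i)$ is of the form $f\mapsto f*p_i$ for some $p_i\in L^2(H_i)$; $\Pi'_{\nu_i}$ is the operator $f\mapsto f*p_i'$ on $L^2(G)$ where $p_i'=p_i$ on $H_i$ and $p_i'=0$ on $G\setminus H_i$. The Gram matrix of $\Phi_i$ is $[\langle\rho'(g_2)v_i,\rho'(g_1)v_i\rangle]_{g_1,g_2\in G}$; $G$-linear means commuting with the left regular representation. *)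

From HB Require Import structures.
From mathcomp Require Import all_boot all_order all_fingroup all_algebra all_solvable all_field all_character.
Set Implicit Arguments. Unset Strict Implicit. Unset Printing Implicit Defensive.
Import Order.TTheory GRing.Theory Num.Theory.
Local Open Scope ring_scope.

(* The finite group G is the whole finGroupType gT (any finite group is one).
   L^2(G) is modelled by the algC-vector space {ffun gT -> algC}. *)
Notation L2 gT := {ffun gT -> algC}.

Section Defs.
Variable gT : finGroupType.

Definition dotL2 (f h : L2 gT) : algC := \sum_x f x * (h x)^*.

Definition conv (f h : L2 gT) : L2 gT :=
  [ffun s => \sum_x f x * h (x^-1 * s)%g].

Definition delta (g : gT) : L2 gT := [ffun x => (x == g)%:R].

Definition lreg (g : gT) (f : L2 gT) : L2 gT := conv (delta g) f.

Definition PiChi (chi : 'CF([set: gT])) (f : L2 gT) : L2 gT :=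
  conv [ffun x => chi 1%g / #|gT|%:R * (chi x)^*] f.

(* p_i' : the kernel of the projection onto the nu-isotypic subspace of
   L^2(H) (p = conj(nu)/|H| on H), extended by 0 on G \ H *)
Definition pext (H : {group gT}) (nu : 'CF(H)) : L2 gT :=
  [ffun x => if x \in H then (nu x)^* / #|H|%:R else 0].

Definition PiNuExt (H : {group gT}) (nu : 'CF(H)) (f : L2 gT) : L2 gT :=
  conv f (pext nu).

Definition mat (A : L2 gT -> L2 gT) (s g : gT) : algC := A (delta g) s.

Definition dotV d (u w : 'cV[algC]_d) : algC := \sum_j u j 0 * (w j 0)^*.

Definition unitary_repr d (rG : mx_representation algC [set: gT] d) :=
  forall g : gT, rG g *m (map_mx (fun z : algC => z^*) (rG g))^T = 1%:M.

Definition group_frame d (rG : mx_representation algC [set: gT] d)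
  (v : 'cV[algC]_d) :=
  forall w : 'cV[algC]_d, exists c : gT -> algC,
    w = \sum_g c g *: (rG g *m v).

Definition gram d (rG : mx_representation algC [set: gT] d)
  (v : 'cV[algC]_d) (g1 g2 : gT) : algC :=
  dotV (rG g2 *m v) (rG g1 *m v).

Definition in_colspace (K : gT -> gT -> algC) (f : L2 gT) : Prop :=
  exists c : gT -> algC, f = [ffun s => \sum_g c g * K s g].

End Defs.

Section Lin.
Variable gT : finGroupType.
Definition linL2 (M : L2 gT -> L2 gT) : Prop :=
  forall (a : algC) (f h : L2 gT),
    M [ffun x => a * f x + h x] = [ffun x => a * M f x + M h x].
End Lin.

From HB Require Import structures.
From mathcomp Require Import all_boot all_order all_fingroup all_algebra all_solvable all_field all_character.
From mathcomp Require Import ring.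
Set Implicit Arguments. Unset Strict Implicit. Unset Printing Implicit Defensive.
Import Order.TTheory GRing.Theory Num.Theory.
Local Open Scope ring_scope.

(* Both Gram matrices are right convolutions, by the idempotents q_i = e_chi * p_i'
   (e_chi the central idempotent of chi), so V_i = L^2(G) * q_i.  A G-linear map
   that vanishes on V_1^perp is right convolution by m = M q_1, and m = q_1 * m * q_2.
   The Fourier transform f |-> sum_x f(x) rho'(x) is an algebra map sending e_chi to
   the identity (Schur) and p_i' to an idempotent P_i of trace
   |H_i|^-1 sum_{H_i} chi conj(nu_i) = 1, hence of rank one.  So P_1 X P_2 = phi(X) U
   for one fixed matrix U, and both m(y) and the right-hand side are multiples of
   tr(U rho'(y^-1)); m is nonzero since M is isometric on V_1 and q_1 != 0. *)

Section RankOne.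
Variable F : fieldType.

Lemma mxtrace_pid n r : (r <= n)%N -> \tr (pid_mx r : 'M[F]_n) = r%:R.
Proof.
move=> le_rn; rewrite /mxtrace.
under eq_bigr do rewrite mxE eqxx /=.
rewrite -(big_mkord xpredT (fun i => (i < r)%:R)) (big_cat_nat (n:=r)) //=.
rewrite [X in _ + X]big1_seq ?addr0 => [|i]; last first.
  by rewrite mem_index_iota /= => /andP[le_ri _]; rewrite ltnNge le_ri.
rewrite big_nat_cond (eq_bigr (fun _ => 1)) => [|i /andP[/andP[_ ->]]] //.
by rewrite -big_nat_cond sumr_const_nat subn0.
Qed.

Lemma mxtrace_idem n (P : 'M[F]_n) : P *m P = P -> \tr P = (\rank P)%:R.
Proof.
move=> PP; set L := col_ebase P; set U := row_ebase P; set r := \rank P.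
have PE : P = L *m pid_mx r *m U by rewrite mulmx_ebase.
have le_rn : (r <= n)%N by apply: rank_leq_row.
have pid_UL : pid_mx r *m (U *m L) *m pid_mx r = pid_mx r :> 'M_n.
  have := congr1 (fun X => invmx L *m X *m invmx U) PP; rewrite {1 2 3}PE.
  rewrite !mulmxA mulVmx ?col_ebase_unit // mul1mx -!mulmxA.
  by rewrite mulmxV ?row_ebase_unit // mulmx1 !mulmxA.
rewrite PE mxtrace_mulC mulmxA -(pid_mx_id _ _ _ le_rn) mulmxA mxtrace_mulC.
by rewrite !mulmxA -(mulmxA _ U) pid_UL mxtrace_pid.
Qed.

Lemma rank1_sandwich n (P Q : 'M[F]_n) :
  \rank P = 1%N -> \rank Q = 1%N ->
  exists U : 'M_n, exists phi : 'M_n -> F, forall B, P *m B *m Q = phi B *: U.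
Proof.
move=> rP rQ; have := mulmx_base P; have := mulmx_base Q.
move: (col_base P) (row_base P) (col_base Q) (row_base Q); rewrite rP rQ.
move=> cP rwP cQ rwQ <- <-.
exists (cP *m rwQ), (fun B => (rwP *m B *m cQ) 0 0) => B.
rewrite -!mulmxA (mulmxA rwP) (mulmxA (rwP *m B)) [rwP *m B *m cQ]mx11_scalar.
by rewrite mul_scalar_mx -scalemxAr mulmxA.
Qed.

End RankOne.

Lemma sum_mul_conjC_eq0 (I : finType) (x : I -> algC) :
  \sum_i x i * (x i)^* = 0 -> forall i, x i = 0.
Proof.
move=> sum0 i; apply/eqP; rewrite -normr_eq0 -sqrf_eq0.
have /eqP : \sum_j `|x j| ^+ 2 = 0.
  by rewrite -[RHS]sum0; apply: eq_bigr => j _; rewrite normCK.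
rewrite psumr_eq0 => [/allP/(_ i (mem_index_enum i))/implyP/(_ isT)//|j _].
by rewrite exprn_ge0.
Qed.

Section Convolution.
Variable gT : finGroupType.
Implicit Types (f h k : L2 gT) (M : L2 gT -> L2 gT).

Definition adj f : L2 gT := [ffun x => (f x^-1%g)^*].

Lemma conv_deltaE g f s : conv (delta g) f s = f (g^-1 * s)%g.
Proof.
rewrite ffunE (bigD1 g) //= big1 ?addr0 => [|x nx]; first by rewrite ffunE eqxx mul1r.
by rewrite ffunE (negbTE nx) mul0r.
Qed.

Lemma conv_assoc f h k : conv (conv f h) k = conv f (conv h k).
Proof.
apply/ffunP => s; rewrite !ffunE.
under eq_bigr do rewrite ffunE mulr_suml.
rewrite exchange_big /=; apply: eq_bigr => x _.
rewrite ffunE mulr_sumr (reindex_inj (mulgI x)) /=; apply: eq_bigr => y _.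
by rewrite mulKg mulrA invMg mulgA.
Qed.

Lemma conv_classC k f :
  (forall x y, k (x * y)%g = k (y * x)%g) -> conv k f = conv f k.
Proof.
move=> kC; apply/ffunP => s; rewrite !ffunE.
rewrite (reindex_inj (inj_comp (mulgI s) invg_inj)) /=.
by apply: eq_bigr => y _; rewrite invMg invgK -mulgA mulVg mulg1 kC mulrC.
Qed.

Lemma dotL2_conv f k h : dotL2 (conv f k) h = dotL2 f (conv h (adj k)).
Proof.
rewrite /dotL2; under eq_bigr do rewrite ffunE mulr_suml.
rewrite exchange_big /=; apply: eq_bigr => x _.
rewrite ffunE rmorph_sum mulr_sumr; apply: eq_bigr => y _.
by rewrite ffunE rmorphM /= conjCK invMg invgK -mulrA [k _ * _]mulrC.
Qed.

Lemma adj_conv f h : adj (conv f h) = conv (adj h) (adj f).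
Proof.
apply/ffunP => x; rewrite !ffunE rmorph_sum.
rewrite [RHS](reindex_inj (mulgI x)) /=; apply: eq_bigr => y _.
by rewrite !ffunE rmorphM /= !invMg !invgK mulKg mulrC.
Qed.

Lemma dotL2_eq0 f : dotL2 f f = 0 -> f = [ffun _ => 0].
Proof. by move/sum_mul_conjC_eq0 => f0; apply/ffunP => x; rewrite f0 ffunE. Qed.

Lemma linL2_sum M (r : seq gT) (a : gT -> algC) (F : gT -> L2 gT) :
  linL2 M ->
  M [ffun s => \sum_(x <- r) a x * F x s] = [ffun s => \sum_(x <- r) a x * M (F x) s].
Proof.
move=> Mlin.
have M0 : M [ffun _ => 0] = [ffun _ => 0].
  have := Mlin 1 [ffun _ => 0] [ffun _ => 0].
  rewrite (_ : [ffun x => _] = [ffun _ => 0]) => [E|]; last first.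
    by apply/ffunP => x; rewrite !ffunE mulr0 addr0.
  apply/ffunP => x; have := congr1 (fun h : L2 gT => h x) E.
  by rewrite !ffunE mul1r -{1}[M _ x]addr0 => /addrI <-.
elim: r => [|y r IH].
  by rewrite (_ : [ffun s => _] = [ffun _ => 0]) ?M0;
    apply/ffunP => s; rewrite !ffunE big_nil.
have -> : [ffun s => \sum_(x <- y :: r) a x * F x s] =
  [ffun s => a y * F y s + [ffun s => \sum_(x <- r) a x * F x s] s].
  by apply/ffunP => s; rewrite !ffunE big_cons.
by rewrite Mlin IH; apply/ffunP => s; rewrite !ffunE big_cons.
Qed.

Section Intertwiner.
Variables (q : L2 gT) (V : L2 gT -> Prop) (M : L2 gT -> L2 gT).
Hypotheses (q_idem : conv q q = q) (q_adj : adj q = q).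
Hypothesis VE : forall f, V f <-> exists w, f = conv w q.
Hypotheses (Mlin : linL2 M) (MG : forall g f, V f -> M (lreg g f) = lreg g (M f)).
Hypothesis Mperp : forall f, (forall w, V w -> dotL2 f w = 0) -> M f = 0.

Lemma intertwiner_convr f : M f = conv f (M q).
Proof.
have Vq : V q by apply/VE; exists q.
have M_convq : M (conv f q) = conv f (M q).
  rewrite (_ : conv f q = [ffun s => \sum_(x <- index_enum gT) f x * lreg x q s]).
    rewrite linL2_sum //; apply/ffunP => s; rewrite !ffunE; apply: eq_bigr => x _.
    by rewrite MG // /lreg conv_deltaE.
  by apply/ffunP => s; rewrite !ffunE; apply: eq_bigr => x _; rewrite /lreg conv_deltaE.
(* [q] idempotent and self-adjoint: [f |-> f * q] is the orthogonal projection onto [V] *)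
have M_perp : M [ffun s => f s - conv f q s] = [ffun _ => 0].
  apply: Mperp => _ /VE[w ->].
  rewrite (_ : dotL2 _ _ = dotL2 f (conv w q) - dotL2 (conv f q) (conv w q)).
    by rewrite dotL2_conv q_adj conv_assoc q_idem subrr.
  by rewrite /dotL2 -sumrB; apply: eq_bigr => x _; rewrite ffunE mulrBl.
rewrite {1}(_ : f = [ffun s => 1 * [ffun s => f s - conv f q s] s + conv f q s]).
  by rewrite Mlin M_perp M_convq; apply/ffunP => s; rewrite !ffunE mulr0 add0r.
by apply/ffunP => s; rewrite !ffunE mul1r subrK.
Qed.

End Intertwiner.
End Convolution.

Section SubgroupProjection.
Variables (gT : finGroupType) (H : {group gT}) (nu : 'CF(H)).

Lemma cardH_neq0 : #|H|%:R != 0 :> algC.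
Proof. by rewrite pnatr_eq0 -lt0n cardG_gt0. Qed.

Lemma sum_pextM (F : gT -> algC) :
  \sum_x pext nu x * F x = #|H|%:R^-1 * \sum_(x in H) (nu x)^* * F x.
Proof.
rewrite mulr_sumr (bigID (mem H)) /= [X in _ + X]big1 ?addr0.
  by apply: eq_bigr => x xH; rewrite ffunE xH mulrAC mulrC mulrA.
by move=> x /negbTE xH; rewrite ffunE xH mul0r.
Qed.

Hypothesis nu_lin : nu \is a linear_char.

Lemma pext_idem : conv (pext nu) (pext nu) = pext nu.
Proof.
apply/ffunP => s; rewrite ffunE sum_pextM ffunE.
have [sH | sNH] := boolP (s \in H).
  rewrite (eq_bigr (fun _ => (nu s)^* / #|H|%:R)) => [|x xH]; last first.
    rewrite ffunE groupM ?groupV // mulrA -rmorphM /=.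
    by rewrite -lin_charM ?groupM ?groupV // mulgA mulgV mul1g.
  by rewrite sumr_const -mulr_natr; field; apply: cardH_neq0.
rewrite big1 ?mulr0 // => x xH; rewrite ffunE.
case: ifP => [/(groupM xH)|_]; last by rewrite mulr0.
by rewrite mulgA mulgV mul1g (negbTE sNH).
Qed.

Lemma pext_adj : adj (pext nu) = pext nu.
Proof.
apply/ffunP => y; rewrite !ffunE groupV; case: ifP => yH; last by rewrite rmorph0.
by rewrite rmorphM /= conjCK fmorphV /= rmorph_nat lin_charV_conj.
Qed.

End SubgroupProjection.

Section Fourier.
Variables (gT : finGroupType) (d : nat) (rG : mx_representation algC [set: gT] d).
Local Notation chi := (cfRepr rG).

Definition fourier (f : L2 gT) : 'M[algC]_d := \sum_x f x *: rG x.

(* the central idempotent [e_chi], so that [PiChi chi f = conv eChi f] *)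
Definition eChi : L2 gT := [ffun x => chi 1%g / #|gT|%:R * (chi x)^*].

Lemma repr_mxMT (x y : gT) : rG (x * y)%g = rG x *m rG y.
Proof. by rewrite repr_mxM ?inE. Qed.

Lemma cfRepr_trace (x : gT) : chi x = \tr (rG x).
Proof. by rewrite cfunE inE mulr1n. Qed.

Lemma cfReprC (x y : gT) : chi (x * y)%g = chi (y * x)%g.
Proof. by rewrite !cfRepr_trace !repr_mxMT mxtrace_mulC. Qed.

Lemma fourier_conv f h : fourier (conv f h) = fourier f *m fourier h.
Proof.
rewrite /fourier mulmx_suml; under eq_bigr do rewrite ffunE scaler_suml.
rewrite exchange_big /=; apply: eq_bigr => x _.
rewrite mulmx_sumr (reindex_inj (mulgI x)) /=; apply: eq_bigr => y _.
by rewrite mulKg repr_mxMT -scalemxAl -scalemxAr scalerA.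
Qed.

Lemma eChi_conv f : conv eChi f = conv f eChi.
Proof. by apply: conv_classC => x y; rewrite !ffunE cfReprC. Qed.

Lemma conv_eChiE f y :
  conv eChi f y = chi 1%g / #|gT|%:R * \tr (fourier f *m rG y^-1%g).
Proof.
rewrite eChi_conv !ffunE /fourier mulmx_suml raddf_sum mulr_sumr.
apply: eq_bigr => x _; rewrite ffunE -char_inv ?cfRepr_char // invMg invgK.
rewrite [chi (_ * _)%g]cfRepr_trace repr_mxMT -scalemxAl /= mxtraceZ.
by rewrite mxtrace_mulC mulrCA.
Qed.

Lemma eChi_adj : adj eChi = eChi.
Proof.
apply/ffunP => y; rewrite !ffunE char_inv ?cfRepr_char // rmorphM /= conjCK.
by rewrite cfRepr1 rmorphM /= rmorph_nat fmorphV /= rmorph_nat.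
Qed.

Lemma cardT_neq0 : #|gT|%:R != 0 :> algC.
Proof. by rewrite -cardsT; apply: cardH_neq0. Qed.

Lemma mxtrace_fourier_pext (H : {group gT}) (nu : 'CF(H)) :
  \tr (fourier (pext nu)) = #|H|%:R^-1 * \sum_(s in H) chi s * (nu s)^*.
Proof.
rewrite /fourier raddf_sum /=; under eq_bigr do rewrite mxtraceZ -cfRepr_trace.
by rewrite sum_pextM; congr (_ * _); apply: eq_bigr => x _; rewrite mulrC.
Qed.

Hypothesis irr_rG : mx_irreducible rG.

Lemma dim_gt0 : (0 < d)%N.
Proof. by case/mx_irrP: irr_rG. Qed.

Lemma cfnorm_repr : \sum_x chi x * (chi x)^* = #|gT|%:R.
Proof.
have /irrP[i chiE] : chi \in irr [set: gT].
  by apply/irr_reprP; exists (Representation rG).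
have := cfnorm_irr i; rewrite -chiE cfdotE cardsT => /(congr1 ( *%R #|gT|%:R)).
rewrite mulrA mulfV ?cardT_neq0 // mul1r mulr1 => <-.
by apply: eq_bigl => x; rewrite inE.
Qed.

(* Schur: [\sum_x chi(x)^* rG x] commutes with [rG], hence is scalar *)
Lemma fourier_eChi : fourier eChi = 1%:M.
Proof.
set S := \sum_x (chi x)^* *: rG x.
have cS : centgmx rG S.
  apply/centgmxP => g _; rewrite /S mulmx_suml mulmx_sumr.
  rewrite [RHS](reindex_inj (conjg_inj g)) /=; apply: eq_bigr => y _.
  by rewrite cfunJ ?inE // -scalemxAl -scalemxAr -!repr_mxMT -conjgC.
have [a Sa] := is_scalar_mxP (mx_abs_irr_cent_scalar (groupC irr_rG) cS).
have trS : a *+ d = #|gT|%:R.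
  rewrite -mxtrace_scalar -Sa /S raddf_sum /= -cfnorm_repr.
  by apply: eq_bigr => x _; rewrite mxtraceZ cfRepr_trace mulrC.
have -> : fourier eChi = (chi 1%g / #|gT|%:R) *: S.
  by rewrite /fourier /S scaler_sumr; apply: eq_bigr => x _; rewrite ffunE scalerA.
have d0 : d%:R != 0 :> algC by rewrite pnatr_eq0 -lt0n dim_gt0.
have a0 : a != 0 by apply: contraNneq cardT_neq0 => a0; rewrite -trS a0 mul0rn.
rewrite Sa scale_scalar_mx cfRepr1 -trS -mulr_natr; congr (_%:M); field.
by apply/andP.
Qed.

Lemma eChi_idem : conv eChi eChi = eChi.
Proof.
apply/ffunP => y; rewrite conv_eChiE fourier_eChi mul1mx -cfRepr_trace.
by rewrite char_inv ?cfRepr_char // ffunE.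
Qed.

End Fourier.

Section Frames.
Variables (gT : finGroupType) (d : nat) (rG : mx_representation algC [set: gT] d).
Local Notation chi := (cfRepr rG).
Hypothesis irr_rG : mx_irreducible rG.
Variables (H : {group gT}) (nu : 'CF(H)).
Hypothesis nu_lin : nu \is a linear_char.
Hypothesis chi_nu : \sum_(s in H) chi s * (nu s)^* = #|H|%:R.

(* [PiChi chi \o PiNuExt nu] is [f |-> conv f chiNuIdem], since [eChi] is central *)
Definition chiNuIdem : L2 gT := conv (eChi rG) (pext nu).

Lemma mat_PiChi_PiNuExt g1 g2 :
  mat (PiChi chi \o PiNuExt nu) g1 g2 = chiNuIdem (g2^-1 * g1)%g.
Proof.
rewrite /mat /= /PiChi /PiNuExt -/(eChi rG) -conv_assoc eChi_conv conv_assoc.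
by rewrite conv_deltaE.
Qed.

Lemma chiNuIdem_idem : conv chiNuIdem chiNuIdem = chiNuIdem.
Proof.
rewrite /chiNuIdem conv_assoc -(conv_assoc (pext nu)) -eChi_conv.
by rewrite conv_assoc pext_idem // -conv_assoc eChi_idem.
Qed.

Lemma chiNuIdem_adj : adj chiNuIdem = chiNuIdem.
Proof. by rewrite /chiNuIdem adj_conv eChi_adj pext_adj // -eChi_conv. Qed.

Lemma fourier_chiNuIdem : fourier rG chiNuIdem = fourier rG (pext nu).
Proof. by rewrite fourier_conv fourier_eChi // mul1mx. Qed.

Lemma mxtrace_fourier_pext1 : \tr (fourier rG (pext nu)) = 1.
Proof. by rewrite mxtrace_fourier_pext chi_nu mulVf ?cardH_neq0. Qed.

Lemma rank_fourier_pext : \rank (fourier rG (pext nu)) = 1%N.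
Proof.
apply/eqP; rewrite -(eqr_nat algC) -mxtrace_idem -?fourier_conv ?pext_idem //.
by rewrite mxtrace_fourier_pext1.
Qed.

Lemma chiNuIdem_neq0 : chiNuIdem != [ffun _ => 0].
Proof.
apply: contra_neq (@oner_neq0 algC) => q0.
rewrite -mxtrace_fourier_pext1 -fourier_chiNuIdem q0 /fourier big1 ?mxtrace0 //.
by move=> x _; rewrite ffunE scale0r.
Qed.

Lemma group_frame_dotV_neq0 (v : 'cV[algC]_d) : group_frame rG v -> dotV v v != 0.
Proof.
move=> frame_v; apply/eqP => /sum_mul_conjC_eq0 v0.
have [c E] := frame_v (const_mx 1).
have := congr1 (fun w : 'cV[algC]_d => w (Ordinal (dim_gt0 irr_rG)) 0) E.
rewrite mxE summxE big1 => [/eqP|g _]; first by rewrite oner_eq0.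
have -> : v = 0 by apply/matrixP => i j; rewrite [j]ord1 mxE v0.
by rewrite mulmx0 scaler0 mxE.
Qed.

Lemma gram_colspaceP (v : 'cV[algC]_d) :
  group_frame rG v ->
  (forall g1 g2, gram rG v g1 g2 =
     dotV v v * #|gT|%:R / d%:R * mat (PiChi chi \o PiNuExt nu) g1 g2) ->
  forall f, in_colspace (gram rG v) f <-> exists w, f = conv w chiNuIdem.
Proof.
move=> frame_v gramE f; set C := dotV v v * #|gT|%:R / d%:R.
have C0 : C != 0.
  rewrite !mulf_neq0 ?invr_eq0 ?group_frame_dotV_neq0 ?cardT_neq0 //.
  by rewrite pnatr_eq0 -lt0n (dim_gt0 irr_rG).
split=> [[c ->] | [w ->]].
  exists [ffun g => c g * C]; apply/ffunP => s; rewrite !ffunE.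
  by apply: eq_bigr => g _; rewrite gramE mat_PiChi_PiNuExt [[ffun _ => _] g]ffunE mulrA.
exists (fun g => w g / C); apply/ffunP => s; rewrite !ffunE.
by apply: eq_bigr => g _; rewrite gramE mat_PiChi_PiNuExt mulrA divfK.
Qed.

End Frames.

Section Sandwich.
Variables (gT : finGroupType) (d : nat) (rG : mx_representation algC [set: gT] d).
Local Notation chi := (cfRepr rG).
Variables (H1 H2 : {group gT}) (nu1 : 'CF(H1)) (nu2 : 'CF(H2)).
Local Notation P1 := (fourier rG (pext nu1)).
Local Notation P2 := (fourier rG (pext nu2)).

Lemma chiNuIdem_sandwichE (m : L2 gT) :
  mx_irreducible rG ->
  conv (chiNuIdem rG nu1) m = m -> conv m (chiNuIdem rG nu2) = m ->
  forall y, m y = chi 1%g / #|gT|%:R * \tr (P1 *m fourier rG m *m P2 *m rG y^-1%g).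
Proof.
move=> irr_rG m1 m2 y; rewrite -{1}m1 /chiNuIdem conv_assoc conv_eChiE.
by rewrite fourier_conv -{1}m2 fourier_conv fourier_chiNuIdem // !mulmxA.
Qed.

Lemma sum_lin_char_cfReprE (a s g : gT) :
  (#|H1|%:R * #|H2|%:R)^-1 *
      \sum_(h1 in H1) \sum_(h2 in H2)
        (nu2 h2)^* * chi (a^-1 * h2 * s^-1 * g * h1)%g * (nu1 h1)^*
  = \tr (P1 *m rG a^-1%g *m P2 *m rG (s^-1 * g)%g).
Proof.
have -> : \tr (P1 *m rG a^-1%g *m P2 *m rG (s^-1 * g)%g) =
    \sum_x pext nu1 x * \sum_y pext nu2 y * chi (x * a^-1 * y * (s^-1 * g))%g.
  rewrite /fourier !mulmx_suml raddf_sum; apply: eq_bigr => x _.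
  rewrite mulmx_sumr !mulmx_suml raddf_sum mulr_sumr; apply: eq_bigr => y _ /=.
  rewrite -!scalemxAl -!scalemxAr -scalemxAl !mxtraceZ.
  by rewrite !cfRepr_trace !repr_mxMT !mulmxA mulrA.
rewrite sum_pextM invfM -mulrA; congr (_ * _).
rewrite mulr_sumr; apply: eq_bigr => x xH.
rewrite sum_pextM mulrCA; congr (_ * _).
rewrite mulr_sumr; apply: eq_bigr => y yH.
have -> : chi (x * a^-1 * y * (s^-1 * g))%g = chi (a^-1 * y * s^-1 * g * x)%g.
  by rewrite -!mulgA cfReprC !mulgA.
by rewrite mulrC mulrA.
Qed.

End Sandwich.

Theorem mainTheorem5 (gT : finGroupType) (d : nat)
  (rG : mx_representation algC [set: gT] d)
  (Hirr : mx_irreducible rG) (Hunit : unitary_repr rG)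
  (H1 H2 : {group gT}) (nu1 : 'CF(H1)) (nu2 : 'CF(H2))
  (Hnu1 : nu1 \is a linear_char) (Hnu2 : nu2 \is a linear_char)
  (Hmult1 : \sum_(s in H1) cfRepr rG s * (nu1 s)^* = #|H1|%:R)
  (Hmult2 : \sum_(s in H2) cfRepr rG s * (nu2 s)^* = #|H2|%:R)
  (v1 v2 : 'cV[algC]_d)
  (Hframe1 : group_frame rG v1) (Hframe2 : group_frame rG v2)
  (Hgram1 : forall g1 g2 : gT, gram rG v1 g1 g2 =
     dotV v1 v1 * #|gT|%:R / d%:R * mat (PiChi (cfRepr rG) \o PiNuExt nu1) g1 g2)
  (Hgram2 : forall g1 g2 : gT, gram rG v2 g1 g2 =
     dotV v2 v2 * #|gT|%:R / d%:R * mat (PiChi (cfRepr rG) \o PiNuExt nu2) g1 g2)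
  (M : {ffun gT -> algC} -> {ffun gT -> algC})
  (Mlin : linL2 M)
  (Mmaps : forall f, in_colspace (gram rG v1) f -> in_colspace (gram rG v2) (M f))
  (Monto : forall w, in_colspace (gram rG v2) w ->
     exists2 f, in_colspace (gram rG v1) f & M f = w)
  (Misom : forall f f', in_colspace (gram rG v1) f -> in_colspace (gram rG v1) f' ->
     dotL2 (M f) (M f') = dotL2 f f')
  (MGlin : forall (g : gT) f, in_colspace (gram rG v1) f ->
     M (lreg g f) = lreg g (M f))
  (Mperp : forall f, (forall w, in_colspace (gram rG v1) w -> dotL2 f w = 0) ->
     M f = 0) :
  forall a : gT, exists lam : algC, forall s g : gT,
    lam * mat M s g =
      (#|H1|%:R * #|H2|%:R)^-1 *
      \sum_(h1 in H1) \sum_(h2 in H2)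
        (nu2 h2)^* * cfRepr rG (a^-1 * h2 * s^-1 * g * h1)%g * (nu1 h1)^*.
Proof.
move=> a; set q1 := chiNuIdem rG nu1; set q2 := chiNuIdem rG nu2; set m := M q1.
have V1 := gram_colspaceP Hirr Hframe1 Hgram1.
have V2 := gram_colspaceP Hirr Hframe2 Hgram2.
have q1V : in_colspace (gram rG v1) q1 by apply/V1; exists q1; rewrite chiNuIdem_idem.
have Mconv f : M f = conv f m.
  exact: intertwiner_convr (chiNuIdem_idem Hirr Hnu1) (chiNuIdem_adj rG Hnu1) V1
    Mlin MGlin Mperp f.
have m_q1 : conv q1 m = m by rewrite -Mconv.
have m_q2 : conv m q2 = m.
  have [w ->] : exists w, m = conv w q2 := (V2 _).1 (Mmaps _ q1V).
  by rewrite conv_assoc chiNuIdem_idem.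
have [U [phi Pphi]] :=
  rank1_sandwich (rank_fourier_pext Hnu1 Hmult1) (rank_fourier_pext Hnu2 Hmult2).
set c := cfRepr rG 1%g / #|gT|%:R.
have mE y : m y = c * phi (fourier rG m) * \tr (U *m rG y^-1%g).
  by rewrite (chiNuIdem_sandwichE Hirr m_q1 m_q2) Pphi -scalemxAl mxtraceZ mulrA.
have phi_m : phi (fourier rG m) != 0.
  apply/eqP => phi0; apply: (negP (chiNuIdem_neq0 Hirr Hmult1)).
  apply/eqP/dotL2_eq0.
  by rewrite -Misom // /dotL2 big1 // => y _; rewrite mE phi0 mulr0 !mul0r.
have c0 : c != 0.
  by rewrite mulf_neq0 ?invr_eq0 ?cardT_neq0 // cfRepr1 pnatr_eq0 -lt0n (dim_gt0 Hirr).
exists (phi (rG a^-1%g) / (c * phi (fourier rG m))) => s g.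
rewrite sum_lin_char_cfReprE Pphi -scalemxAl mxtraceZ /mat Mconv conv_deltaE mE invMg invgK.
by field; apply/andP.
Qed.
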